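(* There exists a family of finite sets $u^{\alpha}_n\subseteq\omega_1$, indexed by $\alpha<\omega_1$ and positive integers $n$, such that for all $\alpha<\omega_1$ and all $n\geq 1$: (i) $|u^{\alpha}_n|<n+1$; (ii) $\alpha\in u^{\alpha}_n\subseteq u^{\alpha}_{n+1}$; (iii) $\bigcup_n u^{\alpha}_n=\alpha+1$ (i.e. $=\{\beta:\beta\le\alpha\}$); (iv) if $\beta\in u^{\alpha}_n$ then $u^{\beta}_n=u^{\alpha}_n\cap(\beta+1)$; (v) $\lim_{n\to\infty}\frac{|u^{\alpha}_n|}{n+1}=0$.
   Context: $\omega_1$ is the first uncountable ordinal; ordinals are identified with the set of smaller ordinals, so $\beta+1=\{\gamma:\gamma\le\beta\}$. *)

From Stdlib Require Import Reals List.
Import ListNotations.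

(* (T, lt) is (order-isomorphic to) the first uncountable ordinal omega_1:
   a strict well-order that is uncountable, all of whose proper initial
   segments {b | b < a} are countable. Such a structure is unique up to
   order isomorphism, so quantifying over all of them is the same as
   speaking about omega_1 itself. *)
Definition is_omega1 (T : Type) (lt : T -> T -> Prop) : Prop :=
  (forall x, ~ lt x x) /\
  (forall x y z, lt x y -> lt y z -> lt x z) /\
  (forall x y, lt x y \/ x = y \/ lt y x) /\
  well_founded lt /\
  (~ exists f : T -> nat, forall x y, f x = f y -> x = y) /\
  (forall a : T, exists f : T -> nat,
      forall x y, lt x a -> lt y a -> f x = f y -> x = y).

(* Finite subsets of T are represented by duplicate-free lists;
   the cardinality of the set is the length of the list. *)

From Stdlib Require Import Reals List Lia Lra.
From Stdlib Require Import Classical ClassicalEpsilon FunctionalExtensionality.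
Import ListNotations.

(* [u a] is built by well-founded recursion on [a]; a minimal [a] gets [u a n = [a]].
   Otherwise enumerate the countably many predecessors of [a] as [e 0, e 1, ...], let
   [s j] be the largest of [e 0, ..., e j], and put [u a n = a :: u (s j) n] on the
   stages [n] where a slowly growing counter equals [j + 1].  The counter may move from
   [j + 1] to [j + 2] only once [n] is so large that [u (s j) n] contains [e 0, ..., e j]
   and has fewer than [n / (j + 1)] elements.  The first requirement gives (iii) and,
   via (iv) at [s (j + 1)], the monotonicity (ii) when the counter moves; the second
   gives (i) and, as the counter tends to infinity, the density bound (v).  Finally
   (iv) at [a] is inherited from (iv) at [s j]. *)

Definition eventually (P : nat -> Prop) : Prop := exists N, forall n, N <= n -> P n.

Lemma eventually_and (P Q : nat -> Prop) :
  eventually P -> eventually Q -> eventually (fun n => P n /\ Q n).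
Proof.
  intros [N1 H1] [N2 H2]. exists (Nat.max N1 N2).
  intros n Hn. split; [apply H1 | apply H2]; lia.
Qed.

Lemma eventually_forall_le (P : nat -> nat -> Prop) (j : nat) :
  (forall i, i <= j -> eventually (P i)) ->
  eventually (fun n => forall i, i <= j -> P i n).
Proof.
  induction j as [|j IH]; intros H.
  - destruct (H 0 (le_n 0)) as [N HN]. exists N.
    intros n Hn i Hi. replace i with 0 by lia. auto.
  - destruct (eventually_and _ _ (IH (fun i Hi => H i (le_S _ _ Hi))) (H (S j) (le_n _)))
      as [N HN].
    exists N. intros n Hn i Hi. destruct (HN n Hn) as [Hle HSj].
    destruct (Nat.eq_dec i (S j)) as [-> | Hne]; [exact HSj | apply Hle; lia].
Qed.

Definition sparse (f : nat -> nat) : Prop :=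
  forall c, eventually (fun n => f n * c <= n).

Lemma sparse_Un_cv (f : nat -> nat) :
  sparse f -> Un_cv (fun n => (INR (f n) / INR (n + 1))%R) 0%R.
Proof.
  intros Hf eps Heps.
  destruct (archimed_cor1 eps Heps) as [c [Hc_eps Hc_pos]].
  destruct (Hf c) as [N HN]. exists N. intros n Hn.
  assert (Hfc : (INR (f n) * INR c <= INR n)%R).
  { rewrite <- mult_INR. apply le_INR, HN. lia. }
  assert (Hc : (0 < INR c)%R) by (apply lt_0_INR; lia).
  assert (Hn0 := pos_INR n).
  assert (Hf0 := pos_INR (f n)).
  unfold R_dist. rewrite Rminus_0_r, plus_INR. simpl (INR 1).
  set (q := (INR (f n) / (INR n + 1))%R).
  assert (Hq : (q * (INR n + 1) = INR (f n))%R) by (unfold q; field; lra).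
  assert (Hq0 : (0 <= q)%R).
  { unfold q. apply Rmult_le_pos; [lra | left; apply Rinv_0_lt_compat; lra]. }
  assert (Hqc : (q * INR c < 1)%R).
  { apply (Rmult_lt_reg_r (INR n + 1)); [lra|]. nra. }
  assert (Hq_inv : (q < / INR c)%R).
  { apply (Rmult_lt_reg_r (INR c)); [lra|]. rewrite Rinv_l by lra. exact Hqc. }
  rewrite Rabs_pos_eq by exact Hq0.
  lra.
Qed.

Lemma unit_steps_monotone (K : nat -> nat) :
  (forall n, K (S n) = K n \/ K (S n) = S (K n)) -> forall n m, n <= m -> K n <= K m.
Proof. intros Hstep n m Hnm. induction Hnm; [lia | destruct (Hstep m); lia]. Qed.

Fixpoint stage (N : nat -> nat) (n : nat) : nat :=
  match n with
  | 0 => 0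
  | S n => if N (stage N n) <=? S n then S (stage N n) else stage N n
  end.

Lemma stage_succ N n : stage N (S n) = stage N n \/ stage N (S n) = S (stage N n).
Proof. simpl. destruct (N (stage N n) <=? S n); auto. Qed.

Lemma stage_threshold {N n j} : stage N n = S j -> N j <= n.
Proof.
  revert j. induction n as [|n IH]; intros j E; simpl in E; [discriminate|].
  destruct (N (stage N n) <=? S n) eqn:Hle.
  - apply Nat.leb_le in Hle. injection E as <-. exact Hle.
  - specialize (IH j E). lia.
Qed.

Lemma stage_unbounded N j : exists n, j <= stage N n.
Proof.
  induction j as [|j [n Hn]]; [exists 0; lia|].
  exists (S (n + N j)).
  assert (Hmono : stage N n <= stage N (n + N j))
    by (apply unit_steps_monotone; [apply stage_succ | lia]).
  simpl. destruct (N (stage N (n + N j)) <=? S (n + N j)) eqn:Hle; [lia|].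
  apply Nat.leb_gt in Hle.
  destruct (Nat.eq_dec (stage N (n + N j)) j) as [E | E]; [rewrite E in Hle; lia | lia].
Qed.

Lemma enumerate_countable {T : Type} (P : T -> Prop) (f : T -> nat) (b0 : T) :
  (forall x y, P x -> P y -> f x = f y -> x = y) -> P b0 ->
  exists e : nat -> T, (forall i, P (e i)) /\ (forall b, P b -> exists i, e i = b).
Proof.
  intros Hf Hb0.
  destruct (choice (fun m b => P b /\ ((exists b', P b' /\ f b' = m) -> f b = m)))
    as [e He].
  { intros m. destruct (classic (exists b', P b' /\ f b' = m)) as [[b' [Hb' Hm]] | Hno].
    - exists b'. auto.
    - exists b0. split; [exact Hb0 | contradiction]. }
  exists e. split; [intros i; apply He|].
  intros b Hb. exists (f b). apply Hf; [apply He | exact Hb | apply He; eauto].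
Qed.

Lemma wf_choice_recursion {A X : Type} (R : A -> A -> Prop) (x0 : X)
  (Q : (A -> X) -> A -> X -> Prop) :
  well_founded R ->
  (forall u u' a x, (forall b, R b a -> u b = u' b) -> Q u a x -> Q u' a x) ->
  (forall u a, (forall b, R b a -> Q u b (u b)) -> exists x, Q u a x) ->
  exists u, forall a, Q u a (u a).
Proof.
  intros wf Hloc Hstep.
  pose (below a (h : forall b, R b a -> X) b :=
          match excluded_middle_informative (R b a) with
          | left p => h b p
          | right _ => x0
          end).
  pose (F a h := epsilon (inhabits x0) (Q (below a h) a)).
  pose (u := Fix wf (fun _ => X) F).
  assert (Hu : forall a, u a = F a (fun b _ => u b)).
  { intros a. unfold u. apply (Fix_eq wf (fun _ => X) F). intros a' h h' Hh. unfold F.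
    replace (below a' h) with (below a' h'); [reflexivity|].
    extensionality b. unfold below. destruct (excluded_middle_informative (R b a')); auto. }
  assert (Hbelow : forall a b, R b a -> below a (fun b _ => u b) b = u b).
  { intros a b Hb. unfold below. destruct (excluded_middle_informative (R b a)); tauto. }
  exists u. intros a. induction a as [a IH] using (well_founded_ind wf).
  destruct (Hstep u a IH) as [x Hx].
  apply (Hloc (below a (fun b _ => u b))); [exact (Hbelow a)|].
  rewrite (Hu a). apply epsilon_spec. exists x.
  apply (Hloc u); [|exact Hx]. intros b Hb. symmetry. apply Hbelow, Hb.
Qed.

Section Coherence.

Context {T : Type} (lt : T -> T -> Prop).
Hypothesis lt_irrefl : forall x, ~ lt x x.
Hypothesis lt_trans : forall x y z, lt x y -> lt y z -> lt x z.
Hypothesis lt_total : forall x y, lt x y \/ x = y \/ lt y x.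

Record coherent_at (u : T -> nat -> list T) (a : T) (v : nat -> list T) : Prop := {
  coh_NoDup : forall n, 1 <= n -> NoDup (v n);
  coh_length : forall n, 1 <= n -> length (v n) < n + 1;
  coh_self : forall n, 1 <= n -> In a (v n);
  coh_succ : forall n x, 1 <= n -> In x (v n) -> In x (v (S n));
  coh_union : forall b, lt b a \/ b = a <-> exists n, 1 <= n /\ In b (v n);
  coh_restrict : forall n b, 1 <= n -> In b (v n) -> lt b a ->
    forall x, In x (u b n) <-> In x (v n) /\ (lt x b \/ x = b);
  coh_sparse : sparse (fun n => length (v n))
}.

Arguments coh_NoDup {u a v}.
Arguments coh_length {u a v}.
Arguments coh_self {u a v}.
Arguments coh_succ {u a v}.
Arguments coh_union {u a v}.
Arguments coh_restrict {u a v}.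
Arguments coh_sparse {u a v}.

Definition coherent (u : T -> nat -> list T) (a : T) : Prop := coherent_at u a (u a).

Lemma coherent_at_local u u' a v :
  (forall b, lt b a -> u b = u' b) -> coherent_at u a v -> coherent_at u' a v.
Proof.
  intros Hu []. split; auto.
  intros n b Hn Hb Hba. rewrite <- (Hu b Hba). auto.
Qed.

Lemma coherent_le {u c n x} : coherent u c -> 1 <= n -> In x (u c n) -> lt x c \/ x = c.
Proof. intros Hc Hn Hx. apply (coh_union Hc). eauto. Qed.

Lemma coherent_mono {u c m m' x} :
  coherent u c -> 1 <= m -> m <= m' -> In x (u c m) -> In x (u c m').
Proof.
  intros Hc Hm Hmm' Hx. induction Hmm' as [|m' Hmm' IH]; [exact Hx|].
  apply (coh_succ Hc); [lia | exact IH].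
Qed.

Lemma coherent_restrict {u c n b} : coherent u c -> 1 <= n -> In b (u c n) ->
  forall x, In x (u b n) <-> In x (u c n) /\ (lt x b \/ x = b).
Proof.
  intros Hc Hn Hb x. destruct (coherent_le Hc Hn Hb) as [Hbc | ->].
  - exact (coh_restrict Hc n b Hn Hb Hbc x).
  - split; [|tauto]. intros Hx. split; [exact Hx | exact (coherent_le Hc Hn Hx)].
Qed.

Lemma coherent_eventually_In {u c b} :
  coherent u c -> lt b c \/ b = c -> eventually (fun m => In b (u c m)).
Proof.
  intros Hc Hb. destruct (proj1 (coh_union Hc b) Hb) as [m [Hm Hin]].
  exists m. intros m' Hm'. exact (coherent_mono Hc Hm Hm' Hin).
Qed.

Lemma coherent_eventually_small {u c k} :
  coherent u c -> eventually (fun m => (length (u c m) + 1) * k <= m).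
Proof.
  intros Hc. destruct (coh_sparse Hc (2 * k)) as [N HN].
  exists (N + 2 * k). intros m Hm. specialize (HN m ltac:(lia)). nia.
Qed.

Lemma coherent_at_singleton u a : (forall b, ~ lt b a) -> coherent_at u a (fun _ => [a]).
Proof.
  intros Hmin. split.
  - intros n _. constructor; [intros [] | constructor].
  - intros n Hn. simpl. lia.
  - intros n _. left. reflexivity.
  - intros n x _ Hx. exact Hx.
  - intros b. split.
    + intros [Hb | ->]; [destruct (Hmin b Hb) | exists 1; simpl; auto].
    + intros (n & _ & [-> | []]). auto.
  - intros n b _ _ Hb. destruct (Hmin b Hb).
  - intros c. exists c. intros n Hn. simpl. lia.
Qed.

Section Tower.

Variables (u : T -> nat -> list T) (a : T) (s : nat -> T) (K : nat -> nat).
Hypothesis s_lt : forall j, lt (s j) a.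
Hypothesis s_coherent : forall j, coherent u (s j).
Hypothesis K_step : forall n, K (S n) = K n \/ K (S n) = S (K n).
Hypothesis K_unbounded : forall j, exists n, j <= K n.
Hypothesis K_small : forall n j, K n = S j -> (length (u (s j) n) + 1) * (j + 1) <= n.
Hypothesis K_link : forall n j, K n = S (S j) -> In (s j) (u (s (S j)) n).
Hypothesis K_cover : forall b, lt b a -> exists n j, K n = S j /\ In b (u (s j) n).

Definition tower (n : nat) : list T :=
  match K n with 0 => [a] | S j => a :: u (s j) n end.

Lemma tower_stage_pos {n j} : K n = S j -> 1 <= n.
Proof. intros E. specialize (K_small _ _ E). nia. Qed.

Lemma tower_below {n j x} : K n = S j -> In x (u (s j) n) -> lt x a.
Proof.
  intros E Hx.
  destruct (coherent_le (s_coherent j) (tower_stage_pos E) Hx) as [Hxs | ->]; eauto.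
Qed.

Lemma tower_succ n x : 1 <= n -> In x (tower n) -> In x (tower (S n)).
Proof.
  unfold tower. intros Hn Hx.
  destruct (K n) as [|j] eqn:E;
    destruct (K_step n) as [E' | E']; rewrite E', E; rewrite E in E'.
  - exact Hx.
  - destruct Hx as [-> | []]. left. reflexivity.
  - destruct Hx as [-> | Hx]; [left; reflexivity | right].
    exact (coh_succ (s_coherent j) n x Hn Hx).
  - destruct Hx as [-> | Hx]; [left; reflexivity | right].
    (* [s j] lies in [u (s (S j)) (S n)], so (iv) at [s (S j)] embeds [u (s j) (S n)] there. *)
    apply (coherent_restrict (s_coherent (S j)) (le_S _ _ Hn) (K_link _ _ E')).
    exact (coh_succ (s_coherent j) n x Hn Hx).
Qed.

Lemma tower_union b : lt b a \/ b = a <-> exists n, 1 <= n /\ In b (tower n).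
Proof.
  split.
  - intros [Hb | ->].
    + destruct (K_cover b Hb) as (n & j & E & Hin). exists n.
      split; [exact (tower_stage_pos E)|]. unfold tower. rewrite E. right. exact Hin.
    + exists 1. split; [lia|]. unfold tower. destruct (K 1); left; reflexivity.
  - intros (n & Hn & Hin). unfold tower in Hin.
    destruct (K n) as [|j] eqn:E; destruct Hin as [-> | Hin]; auto.
    + destruct Hin.
    + left. exact (tower_below E Hin).
Qed.

Lemma tower_restrict n b : 1 <= n -> In b (tower n) -> lt b a ->
  forall x, In x (u b n) <-> In x (tower n) /\ (lt x b \/ x = b).
Proof.
  unfold tower. intros Hn Hb Hba x. destruct (K n) as [|j] eqn:E.
  - destruct Hb as [-> | []]. destruct (lt_irrefl _ Hba).
  - destruct Hb as [-> | Hb]; [destruct (lt_irrefl _ Hba)|].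
    rewrite (coherent_restrict (s_coherent j) Hn Hb x). simpl.
    split; [tauto|]. intros [[<- | Hx] Hxb]; [|tauto].
    exfalso. destruct Hxb as [Hab | ->]; [apply (lt_irrefl b) | apply (lt_irrefl _ Hba)]; eauto.
Qed.

Lemma tower_sparse : sparse (fun n => length (tower n)).
Proof.
  intros c. destruct (K_unbounded c) as [n0 Hn0]. exists n0. intros n Hn.
  assert (HK := unit_steps_monotone K K_step n0 n Hn). unfold tower.
  destruct (K n) as [|j] eqn:E; simpl.
  - lia.
  - specialize (K_small _ _ E). nia.
Qed.

Lemma coherent_at_tower : coherent_at u a tower.
Proof.
  split.
  - intros n Hn. unfold tower. destruct (K n) as [|j] eqn:E.
    + constructor; [intros [] | constructor].
    + constructor; [|exact (coh_NoDup (s_coherent j) n Hn)].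
      intros Hin. exact (lt_irrefl _ (tower_below E Hin)).
  - intros n Hn. unfold tower. destruct (K n) as [|j] eqn:E; simpl.
    + lia.
    + specialize (K_small _ _ E). nia.
  - intros n _. unfold tower. destruct (K n); left; reflexivity.
  - exact tower_succ.
  - exact tower_union.
  - exact tower_restrict.
  - exact tower_sparse.
Qed.

End Tower.

Fixpoint running_max (e : nat -> T) (k : nat) : T :=
  match k with
  | 0 => e 0
  | S k =>
      if excluded_middle_informative (lt (running_max e k) (e (S k)))
      then e (S k) else running_max e k
  end.

Lemma running_max_attained e k : exists i, i <= k /\ running_max e k = e i.
Proof.
  induction k as [|k [i [Hi E]]]; simpl; [exists 0; auto|].
  destruct (excluded_middle_informative _); [exists (S k) | exists i]; auto.
Qed.

Lemma running_max_ge e k i : i <= k -> lt (e i) (running_max e k) \/ e i = running_max e k.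
Proof.
  revert i. induction k as [|k IH]; intros i Hi; simpl.
  - replace i with 0 by lia. auto.
  - destruct (excluded_middle_informative _) as [Hlt | Hnlt].
    + destruct (Nat.eq_dec i (S k)) as [-> | Hne]; [auto|].
      destruct (IH i ltac:(lia)) as [H | ->]; left; eauto.
    + destruct (Nat.eq_dec i (S k)) as [-> | Hne]; [|apply IH; lia].
      destruct (lt_total (running_max e k) (e (S k))) as [H | [H | H]];
        [contradiction | auto | auto].
Qed.

Lemma coherent_at_exists u a :
  (exists f : T -> nat, forall x y, lt x a -> lt y a -> f x = f y -> x = y) ->
  (forall b, lt b a -> coherent u b) -> exists v, coherent_at u a v.
Proof.
  intros [f Hf] IH.
  destruct (classic (exists b0, lt b0 a)) as [[b0 Hb0] | Hmin].
  2: { exists (fun _ => [a]). apply coherent_at_singleton. eauto. }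
  destruct (enumerate_countable (fun b => lt b a) f b0 Hf Hb0) as [e [He_lt He_onto]].
  pose (s := running_max e).
  assert (Hs_lt : forall j, lt (s j) a).
  { intros j. destruct (running_max_attained e j) as [i [_ E]]. unfold s. rewrite E. apply He_lt. }
  assert (Hthreshold : forall j, eventually (fun m =>
            (length (u (s j) m) + 1) * (j + 1) <= m /\
            forall i, i <= j -> In (e i) (u (s j) m))).
  { intros j. apply eventually_and; [exact (coherent_eventually_small (IH _ (Hs_lt j)))|].
    apply eventually_forall_le. intros i Hi.
    exact (coherent_eventually_In (IH _ (Hs_lt j)) (running_max_ge e j i Hi)). }
  destruct (choice _ Hthreshold) as [N HN].
  exists (tower u a s (stage N)).
  apply coherent_at_tower; auto.
  - apply stage_succ.
  - apply stage_unbounded.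
  - intros n j E. exact (proj1 (HN j n (stage_threshold E))).
  - intros n j E. destruct (running_max_attained e j) as [i [Hi Ei]].
    unfold s. rewrite Ei. apply (proj2 (HN (S j) n (stage_threshold E))). lia.
  - intros b Hb. destruct (He_onto b Hb) as [i <-].
    destruct (stage_unbounded N (S i)) as [n Hn].
    destruct (stage N n) as [|j] eqn:E; [lia|].
    exists n, j. split; [exact E|]. apply (proj2 (HN j n (stage_threshold E))). lia.
Qed.

End Coherence.

Theorem mainTheorem2 (T : Type) (lt : T -> T -> Prop) :
  is_omega1 T lt ->
  exists u : T -> nat -> list T,
    forall a : T,
      (forall n, (1 <= n)%nat -> NoDup (u a n)) /\
      (* (i) *)
      (forall n, (1 <= n)%nat -> (length (u a n) < n + 1)%nat) /\
      (* (ii) *)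
      (forall n, (1 <= n)%nat ->
         In a (u a n) /\ (forall x, In x (u a n) -> In x (u a (S n)))) /\
      (* (iii) *)
      (forall b, (lt b a \/ b = a) <->
                 exists n, (1 <= n)%nat /\ In b (u a n)) /\
      (* (iv) *)
      (forall n b, (1 <= n)%nat -> In b (u a n) ->
         forall x, In x (u b n) <-> (In x (u a n) /\ (lt x b \/ x = b))) /\
      (* (v) *)
      Un_cv (fun n => (INR (length (u a n)) / INR (n + 1))%R) 0%R.
Proof.
  intros (lt_irrefl & lt_trans & lt_total & lt_wf & _ & segments_countable).
  destruct (wf_choice_recursion lt (fun _ => []) (coherent_at lt) lt_wf) as [u Hu].
  - intros u u' a v. apply coherent_at_local.
  - intros u a IH. apply coherent_at_exists; auto.
  - exists u. intros a.
    destruct (Hu a) as [HNoDup Hlength Hself Hsucc Hunion _ Hsparse].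
    split; [|split; [|split; [|split; [|split]]]]; auto.
    + intros n b Hn Hb. exact (coherent_restrict lt (Hu a) Hn Hb).
    + exact (sparse_Un_cv _ Hsparse).
Qed.
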